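(* Let $M$ be a smooth manifold of dimension $n$ and let $\dot x^i=v^i$, $\dot v^i=\Phi^i(x^1,\ldots,x^n,v^1,\ldots,v^n)$ be a Newtonian dynamical system on $M$. In each local chart define $\Gamma^k_{ij}=-\tfrac12\,\partial^2\Phi^k/\partial v^i\partial v^j$. Then $\Gamma^k_{ij}=\Gamma^k_{ji}$, and under every change of local coordinates $\tilde x=\tilde x(x)$ these functions satisfy $$\Gamma^k_{ij}=\sum_{m,a,c}S^k_mT^a_iT^c_j\tilde\Gamma^m_{ac}+\sum_mS^k_m\frac{\partial T^m_i}{\partial x^j},$$ where $S^i_j=\partial x^i/\partial\tilde x^j$, $T^i_j=\partial\tilde x^i/\partial x^j$ and $\tilde\Gamma$ is computed in the new chart at the corresponding point $(\tilde x,\tilde v)$, $\tilde v^i=\sum_jT^i_jv^j$; i.e. they are the components of a symmetric extended affine connection (in $\mathbf v$-representation) canonically associated with the system.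
   Context: A Newtonian dynamical system on $M$ is a smooth vector field on the tangent bundle $TM$ which in the induced coordinates $(x,v)$ reads $\sum_iv^i\partial/\partial x^i+\sum_i\Phi^i(x,v)\partial/\partial v^i$; equivalently, under a change of coordinates the functions $\Phi^i$ transform as $\tilde\Phi^i=\sum_jT^i_j\Phi^j+\sum_{j,k}(\partial T^i_j/\partial x^k)v^jv^k$. *)

From HB Require Import structures.
From mathcomp Require Import all_boot all_order all_algebra.
From mathcomp Require Import all_classical all_reals all_analysis.
Set Implicit Arguments. Unset Strict Implicit. Unset Printing Implicit Defensive.
Import Order.TTheory GRing.Theory Num.Theory.
Import numFieldNormedType.Exports.
Local Open Scope classical_set_scope.
Local Open Scope ring_scope.

(* A point of R^n is a row vector; its i-th coordinate is x ord0 i. *)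

Definition ebase {R : realType} {n : nat} (i : 'I_n) : 'rV[R]_n := delta_mx 0 i.

Fixpoint iter_derive {R : realType} {V W : normedModType R}
  (l : seq V) (f : V -> W) : V -> W :=
  match l with
  | [::] => f
  | v :: l' => fun x => 'D_v (iter_derive l' f) x
  end.

Definition smooth_on {R : realType} {V W : normedModType R}
  (A : set V) (f : V -> W) : Prop :=
  forall (l : seq V) (x : V), A x -> differentiable (iter_derive l f) x.

Definition jac {R : realType} {n : nat} (psi : 'rV[R]_n -> 'rV[R]_n)
  (x : 'rV[R]_n) : 'M[R]_n :=
  \matrix_(i, j) 'D_(ebase j) (fun y => psi y ord0 i) x.

Definition djac {R : realType} {n : nat} (psi : 'rV[R]_n -> 'rV[R]_n)
  (i j k : 'I_n) (x : 'rV[R]_n) : R :=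
  'D_(ebase k) (fun y => jac psi y i j) x.

Definition Gamma {R : realType} {n : nat}
  (Phi : 'rV[R]_n * 'rV[R]_n -> 'rV[R]_n) (k i j : 'I_n)
  (x v : 'rV[R]_n) : R :=
  - (1 / 2) * 'D_(ebase i) (fun w => 'D_(ebase j) (fun u => Phi (x, u) ord0 k) w) v.

Definition tvel {R : realType} {n : nat} (psi : 'rV[R]_n -> 'rV[R]_n)
  (x v : 'rV[R]_n) : 'rV[R]_n :=
  \row_i \sum_j jac psi x i j * v ord0 j.

(* Gamma is -1/2 times the Hessian of Phi in the velocity variables, so its
   symmetry is Schwarz's theorem.  Differentiating the transformation law of
   Phi twice in v: on the left, tPhi is composed with the linear map v |-> T v,
   so its v-Hessian gets conjugated by T; on the right, the term T Phi gives T
   times the v-Hessian of Phi and the quadratic term dT^m_j/dx^k v^j v^k gives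
   the symmetrised coefficients dT^m_i/dx^j + dT^m_j/dx^i, which are equal by
   Schwarz's theorem for psi.  Multiplying by S = T^-1 (the chain rule for
   phi o psi = id) yields the transformation law of an affine connection.
   Schwarz's theorem itself follows from applying the mean value theorem
   twice to a second difference. *)

From HB Require Import structures.
From mathcomp Require Import all_boot all_order all_algebra.
From mathcomp Require Import all_classical all_reals all_analysis.
From mathcomp Require Import ring lra.

Set Implicit Arguments.
Unset Strict Implicit.
Unset Printing Implicit Defensive.
Import Order.TTheory GRing.Theory Num.Theory.
Import numFieldNormedType.Exports.
Local Open Scope classical_set_scope.
Local Open Scope ring_scope.

Section DirectionalDerivatives.
Variable R : realType.
Implicit Types V W X : normedModType R.

Lemma derive_line_eq V X W (f : V -> W) (g : X -> W) x v x' v' :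
  (forall h : R, f (h *: v + x) = g (h *: v' + x')) ->
  'D_v f x = 'D_v' g x' /\ (derivable f x v <-> derivable g x' v').
Proof.
move=> fg; have fgx : f x = g x' by have := fg 0; rewrite !scale0r !add0r.
rewrite /derive /derivable.
suff -> : (fun h : R => h^-1 *: ((f \o shift x) (h *: v) - f x)) =
          (fun h : R => h^-1 *: ((g \o shift x') (h *: v') - g x')) by [].
by apply/funext => h /=; rewrite fg fgx.
Qed.

Lemma derive_partial V X W (F : V * X -> W) y e w :
  'D_e (fun u => F (y, u)) w = 'D_(0, e) F (y, w).
Proof.
apply: (derive_line_eq _).1 => h.
have -> : h *: ((0 : V), e) + (y, w) = (h *: 0 + y, h *: e + w) by [].
by rewrite scaler0 add0r.
Qed.

Lemma iter_derive_partial V X W (F : V * X -> W) y l :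
  iter_derive l (fun u => F (y, u)) =
  fun u => iter_derive [seq (0, e) | e <- l] F (y, u).
Proof. by elim: l => //= e l ->; apply/funext => w; rewrite derive_partial. Qed.

Lemma iter_derive_comp_linear V X W (L : {linear V -> X}) (F : X -> W) l :
  iter_derive l (F \o L) = iter_derive [seq L e | e <- l] F \o L.
Proof.
elim: l => //= e l ->; apply/funext => w /=.
by apply: (derive_line_eq _).1 => h /=; rewrite linearD linearZ.
Qed.

Lemma smooth_on_partial V X W (A : set V) (F : V * X -> W) y :
  smooth_on (A `*` setT) F -> A y -> smooth_on setT (fun u => F (y, u)).
Proof.
move=> sF Ay l u _; rewrite iter_derive_partial.
apply: (@differentiable_comp _ _ _ _ (fun u => (y, u))).
  exact: differentiable_pair.
exact: sF.
Qed.

Lemma derive_comp V W X (f : V -> W) (g : W -> X) x v :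
  differentiable f x -> differentiable g (f x) ->
  'D_v (g \o f) x = 'D_('D_v f x) g (f x).
Proof.
move=> df dg; rewrite !deriveE //; last exact: differentiable_comp.
by rewrite diff_comp.
Qed.

End DirectionalDerivatives.

Lemma mx_entry_le_norm (R : realType) p q (M : 'M[R]_(p, q)) i j :
  `|M i j| <= `|M|.
Proof. by rewrite [leRHS]mx_normrE; apply: (le_bigmax _ _ (i, j)). Qed.

Section Coordinates.
Variables (R : realType) (X : normedModType R) (m : nat).

Lemma derive_coord (F : X -> 'rV[R]_m) x v k :
  derivable F x v -> 'D_v (fun y => F y ord0 k) x = 'D_v F x ord0 k.
Proof. by move=> dF; rewrite derive_mx // mxE. Qed.

Lemma iter_derive_coord (F : X -> 'rV[R]_m) k l :
  smooth_on setT F ->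
  iter_derive l (fun y => F y ord0 k) = fun y => iter_derive l F y ord0 k.
Proof.
move=> sF; elim: l => //= e l ->; apply/funext => y.
exact/derive_coord/diff_derivable/sF.
Qed.

Lemma smooth_on_coord (F : X -> 'rV[R]_m) k :
  smooth_on setT F -> smooth_on setT (fun y => F y ord0 k).
Proof.
move=> sF l y _; rewrite iter_derive_coord //.
apply: (@differentiable_comp _ _ _ _ _ (fun M : 'rV[R]_m => M ord0 k)).
  exact: sF.
exact: differentiable_coord.
Qed.

Lemma derive2_coord (F : X -> 'rV[R]_m) k a b x : smooth_on setT F ->
  'D_a ('D_b (fun y => F y ord0 k)) x = 'D_a ('D_b F) x ord0 k.
Proof.
by move=> sF; exact: (congr1 (fun g => g x) (iter_derive_coord k [:: a; b] sF)).
Qed.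

End Coordinates.

Section Schwarz.
Variables (R : realType) (X : normedModType R) (m : nat).
Implicit Types (F : X -> 'rV[R]_m) (x a b v : X).

Lemma is_derive_line_coord F x v k s :
  derivable F (s *: v + x) v ->
  is_derive s (1 : R) (fun t => F (t *: v + x) ord0 k)
    ('D_v F (s *: v + x) ord0 k).
Proof.
move=> dF; rewrite -derive_coord //.
have line (h : R) : F ((h *: 1 + s) *: v + x) ord0 k =
    F (h *: v + (s *: v + x)) ord0 k.
  by rewrite -[h *: 1]/(h * 1) mulr1 scalerDl addrA.
have [<- dE] := derive_line_eq (f := fun t : R => F (t *: v + x) ord0 k)
  (g := fun y => F y ord0 k) line.
by apply: DeriveDef => //; apply/dE; move/derivable_mxP: dF; apply.
Qed.

Lemma mvt_line_coord F x v k h : 0 < h ->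
  (forall s, 0 <= s <= h -> derivable F (s *: v + x) v) ->
  exists2 s, 0 < s < h &
    F (h *: v + x) ord0 k - F x ord0 k = h * 'D_v F (s *: v + x) ord0 k.
Proof.
move=> h0 dF.
have dline s : 0 <= s <= h -> is_derive s (1 : R)
    (fun t => F (t *: v + x) ord0 k) ('D_v F (s *: v + x) ord0 k).
  by move=> /dF; apply: is_derive_line_coord.
have cont : {within `[0, h], continuous (fun t => F (t *: v + x) ord0 k)}.
  by apply: derivable_within_continuous => s /[!in_itv] /dline[].
have dline_oo s : s \in `]0, h[ -> is_derive s (1 : R)
    (fun t => F (t *: v + x) ord0 k) ('D_v F (s *: v + x) ord0 k).
  by rewrite in_itv => /andP[s0 sh]; apply: dline; rewrite !ltW.
have [s s_in Es] := MVT h0 dline_oo cont.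
rewrite in_itv /= in s_in; exists s => //.
by rewrite scale0r add0r subr0 mulrC in Es.
Qed.

Lemma box_sub_ball x a b d (h s t : R) :
  h * (`|a| + `|b|) < d -> 0 <= s <= h -> 0 <= t <= h ->
  ball x d (s *: a + (t *: b + x)).
Proof.
move=> hd /andP[s0 sh] /andP[t0 th]; rewrite -ball_normE /=.
rewrite addrA opprD addrCA subrr addr0 normrN.
apply: le_lt_trans (ler_normD _ _) _; rewrite !normrZ !ger0_norm //.
by apply: le_lt_trans hd; rewrite mulrDr lerD // ler_wpM2r.
Qed.

Lemma second_difference_mvt F x a b d k h :
  (forall y, ball x d y -> differentiable F y /\ differentiable ('D_a F) y) ->
  0 < h -> h * (`|a| + `|b|) < d ->
  exists s t, [/\ 0 < s < h, 0 < t < h &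
    F (h *: a + (h *: b + x)) ord0 k - F (h *: a + x) ord0 k
      - F (h *: b + x) ord0 k + F x ord0 k
    = h ^+ 2 * 'D_b ('D_a F) (t *: b + (s *: a + x)) ord0 k].
Proof.
move=> dF h0 hd.
have hh : 0 <= h <= h by rewrite lexx andbT ltW.
have h0h : 0 <= (0 : R) <= h by rewrite lexx ltW.
have dFbox s t : 0 <= s <= h -> 0 <= t <= h ->
    differentiable F (s *: a + (t *: b + x)) /\
    differentiable ('D_a F) (s *: a + (t *: b + x)).
  by move=> hs ht; apply/dF/(box_sub_ball _ hd hs ht).
pose G := (fun y => F (y + h *: b)) - F.
have DG s : 0 <= s <= h -> derivable G (s *: a + x) a /\
    'D_a G (s *: a + x) = 'D_a F (h *: b + (s *: a + x)) - 'D_a F (s *: a + x).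
  move=> hs; have [dFh _] := dFbox s h hs hh; have [dF0 _] := dFbox s 0 hs h0h.
  rewrite addrCA in dFh; rewrite scale0r add0r in dF0.
  have shift (r : R) : F ((r *: a + (s *: a + x)) + h *: b) =
      F (r *: a + (h *: b + (s *: a + x))).
    by rewrite addrAC -addrA.
  have [Dsh dsh] := @derive_line_eq _ _ _ _ (fun y => F (y + h *: b)) F
    (s *: a + x) a (h *: b + (s *: a + x)) a shift.
  have dsh' := dsh.2 (diff_derivable dFh).
  split; first exact: derivableB dsh' (diff_derivable dF0).
  by rewrite deriveB ?Dsh; last exact: diff_derivable dF0.
have [s /andP[s0 sh] Es] := mvt_line_coord k h0 (fun s hs => (DG s hs).1).
have hs : 0 <= s <= h by rewrite !ltW.
have dDaF t : 0 <= t <= h -> derivable ('D_a F) (t *: b + (s *: a + x)) b.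
  by move=> ht; rewrite addrCA; exact/diff_derivable/(dFbox s t hs ht).2.
have [t /andP[t0 th] Et] := mvt_line_coord k h0 dDaF.
exists s, t; split; rewrite ?s0 ?t0 //.
rewrite (DG s hs).2 !mxE Et -[h *: a + x + _]addrA [x + h *: b]addrC in Es.
by rewrite expr2 -mulrA -Es; ring.
Qed.

Lemma derive2C F x a b :
  (\forall y \near x, [/\ differentiable F y, differentiable ('D_a F) y
                        & differentiable ('D_b F) y]) ->
  {for x, continuous ('D_b ('D_a F))} -> {for x, continuous ('D_a ('D_b F))} ->
  'D_b ('D_a F) x = 'D_a ('D_b F) x.
Proof.
move=> dF cab cba; apply/rowP => k; apply/eqP; rewrite -subr_eq0 -normr_le0.
apply/ler_addgt0Pr => e e0; rewrite add0r.
have e2 : 0 < e / 2 by rewrite divr_gt0.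
move/cvgrPdist_lt/(_ _ e2): cab => cab; move/cvgrPdist_lt/(_ _ e2): cba => cba.
have [d d0 near_d] := (nbhs_ballP x _).1 (filterI dF (filterI cab cba)).
pose h := d / (2 * (`|a| + `|b| + 1)).
have h0 : 0 < h by rewrite divr_gt0 // mulr_gt0 // ltr_wpDl ?addr_ge0.
have hab : h * (`|a| + `|b|) < d.
  rewrite /h mulrAC ltr_pdivrMr ?mulr_gt0 ?ltr_wpDl ?addr_ge0 //.
  by rewrite ltr_pM2l //; have := normr_ge0 a; have := normr_ge0 b; lra.
have hba : h * (`|b| + `|a|) < d by rewrite addrC.
have dFa y : ball x d y -> differentiable F y /\ differentiable ('D_a F) y.
  by move=> /near_d[[]].
have dFb y : ball x d y -> differentiable F y /\ differentiable ('D_b F) y.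
  by move=> /near_d[[]].
have [s1 [t1 [s1_in t1_in E1]]] := second_difference_mvt k dFa h0 hab.
have [s2 [t2 [s2_in t2_in E2]]] := second_difference_mvt k dFb h0 hba.
(* the second difference is symmetric in [a] and [b] *)
have same : 'D_b ('D_a F) (t1 *: b + (s1 *: a + x)) ord0 k =
            'D_a ('D_b F) (t2 *: a + (s2 *: b + x)) ord0 k.
  have h2 : h ^+ 2 != 0 by rewrite expf_neq0 ?gt_eqF.
  apply: (mulfI h2); apply: etrans (esym E1) (etrans _ E2).
  by rewrite [h *: b + (h *: a + x)]addrCA; ring.
have box s : 0 < s < h -> 0 <= s <= h by case/andP => *; rewrite !ltW.
have [_ [near1 _]] := near_d _ (box_sub_ball x hba (box _ t1_in) (box _ s1_in)).
have [_ [_ near2]] := near_d _ (box_sub_ball x hab (box _ t2_in) (box _ s2_in)).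
have coord_lt (M N : 'rV[R]_m) :
    `|M - N| < e / 2 -> `|M ord0 k - N ord0 k| < e / 2.
  move=> MN; apply: le_lt_trans MN.
  by have := mx_entry_le_norm (M - N) 0 k; rewrite !mxE.
have close (P Q u1 u2 : R) :
    u1 = u2 -> `|P - u1| < e / 2 -> `|Q - u2| < e / 2 -> `|P - Q| <= e.
  move=> <- Pu Qu; have -> : P - Q = (P - u1) - (Q - u1) by ring.
  by apply: le_trans (ler_normB _ _) _; rewrite [leRHS]splitr lerD ?ltW.
exact: close same (coord_lt _ _ near1) (coord_lt _ _ near2).
Qed.

Lemma smooth_on_derive2C (A : set X) F x a b : open A -> smooth_on A F -> A x ->
  'D_b ('D_a F) x = 'D_a ('D_b F) x.
Proof.
move=> oA sF Ax; apply: derive2C.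
- apply: filterS (open_nbhs_nbhs (conj oA Ax)) => y Ay.
  by split; [exact: (sF [::]) | exact: (sF [:: a]) | exact: (sF [:: b])].
- exact/differentiable_continuous/(sF [:: b; a]).
- exact/differentiable_continuous/(sF [:: a; b]).
Qed.

End Schwarz.

Section Jacobian.
Variables (R : realType) (n : nat).
Local Notation rV := 'rV[R]_n.

Lemma ebaseE (i j : 'I_n) : (ebase j : rV) ord0 i = (i == j)%:R.
Proof. by rewrite /ebase mxE eqxx. Qed.

Lemma derive_rV (W : normedModType R) (f : rV -> W) x v : differentiable f x ->
  'D_v f x = \sum_c v ord0 c *: 'D_(ebase c) f x.
Proof.
move=> df; rewrite deriveE // {1}[v]row_sum_delta linear_sum.
by apply: eq_bigr => c _; rewrite linearZ deriveE.
Qed.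

Lemma jacE (f : rV -> rV) x i j :
  differentiable f x -> jac f x i j = 'D_(ebase j) f x ord0 i.
Proof. by move=> df; rewrite mxE derive_coord //; exact: diff_derivable. Qed.

Lemma jac_comp (f g : rV -> rV) x : differentiable f x -> differentiable g (f x) ->
  jac (g \o f) x = jac g (f x) *m jac f x.
Proof.
move=> df dg; apply/matrixP => i j.
rewrite jacE; last exact: differentiable_comp.
rewrite derive_comp // derive_rV // summxE !mxE.
by apply: eq_bigr => m _; rewrite mxE !jacE // mulrC.
Qed.

Lemma jac_near_id (f : rV -> rV) x : (\forall y \near x, f y = y) -> jac f x = 1%:M.
Proof.
move=> fid; apply/matrixP => i j; rewrite !mxE.
rewrite (@near_eq_derive _ _ _ _ (fun y : rV => y ord0 i)); last first.
  by apply: filterS fid => y ->.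
by rewrite derive_coord ?derive_id ?ebaseE //; exact: derivable_id.
Qed.

Lemma djacE (U : set rV) psi x m i j : open U -> smooth_on U psi -> U x ->
  djac psi m i j x = 'D_(ebase j) ('D_(ebase i) psi) x ord0 m.
Proof.
move=> oU sp Ux; rewrite /djac -derive_coord; last first.
  exact/diff_derivable/(sp [:: ebase i]).
apply: near_eq_derive; apply: filterS (open_nbhs_nbhs (conj oU Ux)) => y Uy.
by rewrite jacE //; exact: (sp [::]).
Qed.

Lemma djacC (U : set rV) psi x m i j : open U -> smooth_on U psi -> U x ->
  djac psi m i j x = djac psi m j i x.
Proof.
move=> oU sp Ux.
by rewrite !(djacE _ _ _ oU sp Ux) (smooth_on_derive2C _ _ oU sp Ux).
Qed.

End Jacobian.

Section SecondDerivatives.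
Variables (R : realType) (n : nat).
Local Notation rV := 'rV[R]_n.

Lemma is_derive_sum_mul (V : normedModType R) k (f : 'I_k -> V -> R)
    (c : 'I_k -> R) (df : 'I_k -> R) x v :
  (forall l, is_derive x v (f l) (df l)) ->
  is_derive x v (fun u => \sum_l c l * f l u) (\sum_l c l * df l).
Proof.
move=> fdf; rewrite -fct_sumE.
exact: (is_derive_sum (fun l => is_deriveZ (c l) (fdf l))).
Qed.

Lemma derive2_rV (f : rV -> R) a b p : smooth_on setT f ->
  'D_a ('D_b f) p =
  \sum_c b ord0 c * \sum_d a ord0 d * 'D_(ebase d) ('D_(ebase c) f) p.
Proof.
move=> sf.
have -> : 'D_b f = fun w => \sum_c b ord0 c * 'D_(ebase c) f w.
  by apply/funext => w; rewrite derive_rV //; exact: (sf [::]).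
apply: derive_val; apply: is_derive_sum_mul => c.
rewrite -derive_rV; last exact: (sf [:: ebase c]).
by apply/derivableP/diff_derivable/(sf [:: ebase c]).
Qed.

Lemma derive2_comp_mulmx (f : rV -> R) (M : 'M[R]_n) a b v : smooth_on setT f ->
  'D_a ('D_b (fun u => f (u *m M))) v =
  \sum_c (b *m M) ord0 c * \sum_d (a *m M) ord0 d *
    'D_(ebase d) ('D_(ebase c) f) (v *m M).
Proof.
move=> sf; rewrite -(derive2_rV (a *m M) (b *m M) (v *m M) sf).
exact: (congr1 (fun g => g v) (iter_derive_comp_linear (mulmxr M) f [:: a; b])).
Qed.

Lemma is_derive_quadratic_line (V : normedModType R) (f : V -> R) x v c1 c2 :
  (forall h : R, f (h *: v + x) = c2 * h ^+ 2 + c1 * h + f x) ->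
  is_derive x v f c1.
Proof.
move=> fh; pose p := c2 *: 'X^2 + c1 *: 'X + (f x)%:P.
have line (h : R) : f (h *: v + x) = p.[h *: 1 + 0].
  by rewrite fh addr0 -[h *: 1]/(h * 1) mulr1 !hornerE.
have [Dfp dfp] := derive_line_eq (f := f) (g := horner p) line.
have [dp Dp] := is_derive_poly p 0.
apply: DeriveDef; first exact/dfp.
by rewrite Dfp Dp !derivD !derivZ derivXn derivX derivC !hornerE; ring.
Qed.

Definition bilin_form (D : 'I_n -> 'I_n -> R) (u w : rV) : R :=
  \sum_i \sum_j D i j * u ord0 i * w ord0 j.

Lemma bilin_formDl D (h : R) a u w :
  bilin_form D (h *: a + u) w = h * bilin_form D a w + bilin_form D u w.
Proof.
rewrite /bilin_form mulr_sumr -big_split /=; apply: eq_bigr => i _.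
rewrite mulr_sumr -big_split /=; apply: eq_bigr => j _.
by rewrite !mxE; ring.
Qed.

Lemma bilin_formDr D (h : R) a u w :
  bilin_form D w (h *: a + u) = h * bilin_form D w a + bilin_form D w u.
Proof.
rewrite /bilin_form mulr_sumr -big_split /=; apply: eq_bigr => i _.
rewrite mulr_sumr -big_split /=; apply: eq_bigr => j _.
by rewrite !mxE; ring.
Qed.

Lemma bilin_form_ebase D i j : bilin_form D (ebase i) (ebase j) = D i j.
Proof.
rewrite /bilin_form (bigD1 i) //= [X in _ + X]big1 => [|k ki]; last first.
  by rewrite big1 // => l _; rewrite !ebaseE (negbTE ki) mulr0 mul0r.
rewrite addr0 (bigD1 j) //= [X in _ + X]big1 => [|l lj]; last first.
  by rewrite !ebaseE (negbTE lj) mulr0.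
by rewrite !ebaseE !eqxx !mulr1 !addr0.
Qed.

Lemma is_derive_bilin_diag D w b :
  is_derive w b (fun u => bilin_form D u u) (bilin_form D b w + bilin_form D w b).
Proof.
apply: (is_derive_quadratic_line (c2 := bilin_form D b b)) => h.
by rewrite bilin_formDl !bilin_formDr; ring.
Qed.

Lemma is_derive_bilin_polar D v a b :
  is_derive v a (fun w => bilin_form D b w + bilin_form D w b)
    (bilin_form D b a + bilin_form D a b).
Proof.
apply: (is_derive_quadratic_line (c2 := 0)) => h.
by rewrite bilin_formDl bilin_formDr; ring.
Qed.

Lemma derive2_lincomb_quad (p : 'I_n -> rV -> R) (c : 'I_n -> R) D a b v :
  (forall l, smooth_on setT (p l)) ->
  'D_a ('D_b (fun u => \sum_l c l * p l u + bilin_form D u u)) v =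
  \sum_l c l * 'D_a ('D_b (p l)) v + (bilin_form D b a + bilin_form D a b).
Proof.
move=> sp.
have dp l w e : is_derive w e (p l) ('D_e (p l) w).
  exact/derivableP/diff_derivable/(sp l [::]).
have ddp l : is_derive v a ('D_b (p l)) ('D_a ('D_b (p l)) v).
  exact/derivableP/diff_derivable/(sp l [:: b]).
have -> : 'D_b (fun u => \sum_l c l * p l u + bilin_form D u u) =
    fun w => \sum_l c l * 'D_b (p l) w + (bilin_form D b w + bilin_form D w b).
  apply/funext => w; apply: derive_val.
  exact: is_deriveD (is_derive_sum_mul c (fun l => dp l w b))
                    (is_derive_bilin_diag D w b).
apply: derive_val.
exact: is_deriveD (is_derive_sum_mul c ddp) (is_derive_bilin_polar D v a b).
Qed.

End SecondDerivatives.

Section Connection.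
Variables (R : realType) (n : nat).
Local Notation rV := 'rV[R]_n.

Lemma Gamma_sym (U : set rV) (Phi : rV * rV -> rV) x v k i j :
  smooth_on (U `*` setT) Phi -> U x -> Gamma Phi k i j x v = Gamma Phi k j i x v.
Proof.
move=> sPhi Ux; have sPx := smooth_on_partial sPhi Ux.
apply: (congr1 (fun r => - (1 / 2) * r)).
rewrite (derive2_coord k _ _ v sPx) (derive2_coord k _ _ v sPx).
have := smooth_on_derive2C (x := v) (ebase j) (ebase i) openT sPx I.
by move=> E; exact: (congr1 (fun M : rV => M ord0 k) E).
Qed.

Lemma tvelE (psi : rV -> rV) x u : tvel psi x u = u *m (jac psi x)^T.
Proof.
by apply/rowP => i; rewrite !mxE; apply: eq_bigr => j _; rewrite !mxE mulrC.
Qed.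

Lemma derive2_comp_tvel (f : rV -> R) psi x i j v : smooth_on setT f ->
  'D_(ebase i) ('D_(ebase j) (fun u => f (tvel psi x u))) v =
  \sum_c jac psi x c j * \sum_a jac psi x a i *
    'D_(ebase a) ('D_(ebase c) f) (tvel psi x v).
Proof.
move=> sf; have -> : (fun u => f (tvel psi x u)) = fun u => f (u *m (jac psi x)^T).
  by apply/funext => u; rewrite tvelE.
rewrite (derive2_comp_mulmx (jac psi x)^T (ebase i) (ebase j) v sf) tvelE.
have coef l c : (ebase l *m (jac psi x)^T) ord0 c = jac psi x c l.
  by rewrite -rowE !mxE.
apply: eq_bigr => c _; rewrite coef; apply: (congr1 (fun z => jac psi x c j * z)).
by apply: eq_bigr => a _; rewrite coef.
Qed.

Lemma jac_inverse (U V : set rV) (psi phi : rV -> rV) x :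
  open U -> (forall x, U x -> V (psi x)) -> (forall x, U x -> phi (psi x) = x) ->
  smooth_on U psi -> smooth_on V phi -> U x ->
  jac phi (psi x) *m jac psi x = 1%:M.
Proof.
move=> oU UV phipsi spsi sphi Ux.
rewrite -jac_comp; [|exact: (spsi [::]) | exact: (sphi [::] _ (UV x Ux))].
apply: jac_near_id; apply: filterS (open_nbhs_nbhs (conj oU Ux)) => y Uy.
exact: phipsi.
Qed.

(* [T] is the Jacobian of the change of chart, [H l] and [tH m a c] stand for
   the second v-derivatives of Phi^l and of tPhi^m, and [C m] for dT^m_i/dx^j. *)
Lemma inverse_transformation_law (S T : 'M[R]_n) (H : 'I_n -> R)
    (tH : 'I_n -> 'I_n -> 'I_n -> R) (C : 'I_n -> R) k i j :
  S *m T = 1%:M ->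
  (forall m, \sum_c T c j * \sum_a T a i * tH m a c = \sum_l T m l * H l + 2 * C m) ->
  - (1 / 2) * H k =
  \sum_m \sum_a \sum_c S k m * T a i * T c j * (- (1 / 2) * tH m a c)
  + \sum_m S k m * C m.
Proof.
move=> ST law.
have ST_H : \sum_m S k m * \sum_l T m l * H l = H k.
  have /(congr1 (fun M : 'cV_n => M k ord0)) := mulmxA S T (\col_l H l).
  rewrite ST mul1mx !mxE => <-; apply: eq_bigr => m _; rewrite mxE.
  by congr (_ * _); apply: eq_bigr => l _; rewrite mxE.
have inner m : \sum_a \sum_c S k m * T a i * T c j * (- (1 / 2) * tH m a c) =
    - (1 / 2) * S k m * (\sum_l T m l * H l + 2 * C m).
  rewrite -law exchange_big mulr_sumr; apply: eq_bigr => c _.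
  by rewrite !mulr_sumr; apply: eq_bigr => a _; ring.
rewrite (eq_bigr _ (fun m _ => inner m)) -ST_H -big_split /= mulr_sumr.
by apply: eq_bigr => m _; field.
Qed.

Lemma hessian_transformation_law (U V : set rV) (psi : rV -> rV)
    (Phi tPhi : rV * rV -> rV) x v i j m :
  open U -> (forall x, U x -> V (psi x)) -> smooth_on U psi ->
  smooth_on (U `*` setT) Phi -> smooth_on (V `*` setT) tPhi ->
  (forall x v, U x -> forall i : 'I_n,
     tPhi (psi x, tvel psi x v) ord0 i =
       \sum_j jac psi x i j * Phi (x, v) ord0 j
       + \sum_j \sum_k djac psi i j k x * v ord0 j * v ord0 k) ->
  U x ->
  \sum_c jac psi x c j * \sum_a jac psi x a i *
    'D_(ebase a) ('D_(ebase c) (fun u => tPhi (psi x, u) ord0 m)) (tvel psi x v)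
  = \sum_l jac psi x m l * 'D_(ebase i) ('D_(ebase j) (fun u => Phi (x, u) ord0 l)) v
    + 2 * djac psi m i j x.
Proof.
move=> oU UV spsi sPhi stPhi law Ux.
have sp l : smooth_on setT (fun u => Phi (x, u) ord0 l).
  exact/smooth_on_coord/(smooth_on_partial sPhi Ux).
have stp : smooth_on setT (fun u => tPhi (psi x, u) ord0 m).
  exact/smooth_on_coord/(smooth_on_partial stPhi (UV x Ux)).
pose D a b := djac psi m a b x.
have lawm : (fun u => tPhi (psi x, tvel psi x u) ord0 m) =
    fun u => \sum_l jac psi x m l * Phi (x, u) ord0 l + bilin_form D u u.
  by apply/funext => u; exact: law.
(* Chained explicitly: rewriting with equations between derivatives makes
   unification unfold [derive] into limits. *)
have := etrans (esym (derive2_comp_tvel psi x i j v stp))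
  (etrans (congr1 (fun f => 'D_(ebase i) ('D_(ebase j) f) v) lawm)
     (derive2_lincomb_quad (jac psi x m) D (ebase i) (ebase j) v sp)).
rewrite !bilin_form_ebase /D (djacC m j i oU spsi Ux) => ->.
by rewrite -mulr2n mulr_natl.
Qed.

End Connection.

Theorem theorem4p1 (R : realType) (n : nat)
  (U V : set 'rV[R]_n) (psi phi : 'rV[R]_n -> 'rV[R]_n)
  (Phi tPhi : 'rV[R]_n * 'rV[R]_n -> 'rV[R]_n) :
  open U -> open V ->
  (* psi : U -> V is a diffeomorphism (change of coordinates) with inverse phi *)
  (forall x, U x -> V (psi x)) -> (forall y, V y -> U (phi y)) ->
  (forall x, U x -> phi (psi x) = x) -> (forall y, V y -> psi (phi y) = y) ->
  smooth_on U psi -> smooth_on V phi ->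
  (* the system in the old and in the new chart *)
  smooth_on (U `*` setT) Phi -> smooth_on (V `*` setT) tPhi ->
  (* transformation law of a Newtonian dynamical system *)
  (forall x v, U x -> forall i : 'I_n,
     tPhi (psi x, tvel psi x v) ord0 i =
       \sum_j jac psi x i j * Phi (x, v) ord0 j
       + \sum_j \sum_k djac psi i j k x * v ord0 j * v ord0 k) ->
  forall x v, U x -> forall k i j : 'I_n,
    Gamma Phi k i j x v = Gamma Phi k j i x v /\
    Gamma Phi k i j x v =
      \sum_m \sum_a \sum_c
         jac phi (psi x) k m * jac psi x a i * jac psi x c j
         * Gamma tPhi m a c (psi x) (tvel psi x v)
      + \sum_m jac phi (psi x) k m * djac psi m i j x.
Proof.
move=> oU _ UV _ phipsi _ spsi sphi sPhi stPhi law x v Ux k i j.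
split; first exact: Gamma_sym sPhi Ux.
apply: (inverse_transformation_law
  (H := fun l => 'D_(ebase i) ('D_(ebase j) (fun u => Phi (x, u) ord0 l)) v)
  (tH := fun m a c =>
     'D_(ebase a) ('D_(ebase c) (fun u => tPhi (psi x, u) ord0 m)) (tvel psi x v))
  (C := fun m => djac psi m i j x) k (jac_inverse oU UV phipsi spsi sphi Ux)).
by move=> m; exact: (hessian_transformation_law v i j m oU UV spsi sPhi stPhi law Ux).
Qed.
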